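(* Let $A, B, C, D \in \mathrm{SL}(2,\mathbb{R})$ and for integers $k, \ell$ let $M_{k,\ell} = D^\ell C B^k A$. Suppose $\mathrm{Tr}(B) = \mathrm{Tr}(D)$ and that for some integer $n \ge 0$, $$\mathrm{Tr}(M_{0,0}) = \mathrm{Tr}(B^n), \quad \mathrm{Tr}(M_{1,1}) = \mathrm{Tr}(B^{n+2}), \quad \mathrm{Tr}(M_{2,2}) = \mathrm{Tr}(B^{n+4}).$$ Then for all integers $k \ge 3$, $\mathrm{Tr}(M_{k,k}) = \mathrm{Tr}(B^{n+2k})$. *)

From mathcomp Require Import all_boot all_order all_algebra.
From mathcomp Require Import reals.
Set Implicit Arguments. Unset Strict Implicit. Unset Printing Implicit Defensive.
Import GRing.Theory Num.Theory.
Local Open Scope ring_scope.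

Definition SL2 (R : realType) (A : 'M[R]_2) : Prop := \det A = 1.

(* M_{k,l} = D^l C B^k A (nonnegative exponents suffice for the statement) *)
Definition Mkl (R : realType) (A B C D : 'M[R]_2) (k l : nat) : 'M[R]_2 :=
  D ^+ l *m C *m B ^+ k *m A.

(* By Cayley-Hamilton, a matrix B with det B = 1 and tr B = t satisfies
   B^k = u_(k+1) B - u_k for the sequence u_0 = -1, u_1 = 0,
   u_(k+2) = t u_(k+1) - u_k.  As tr D = tr B, D^k expands the same way, so
   tr (D^k C B^k A) and tr (B^(n+2k)) = tr (B^k B^n B^k) are both binary quadratic
   forms evaluated at (u_(k+1), u_k).  The cases k = 0, 1, 2 force equal outer
   coefficients and, if t <> 0, equal middle coefficients; if t = 0 the middle
   term vanishes anyway since u_(k+1) u_k = 0.  Only B and D need determinant 1. *)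

From mathcomp Require Import all_boot all_order all_algebra.
From mathcomp Require Import reals ring.
Import GRing.Theory.
Local Open Scope ring_scope.

Lemma char_poly_mx2 (R : comNzRingType) (A : 'M[R]_2) :
  char_poly A = 'X^2 - (\tr A)%:P * 'X + (\det A)%:P.
Proof.
have size_chA := size_char_poly A.
apply/polyP => -[|[|[|i]]].
- by rewrite char_poly_det !coefE /= expr2 mulrNN !mul1r mulr0 subr0 add0r.
- by rewrite (char_poly_trace A) // !coefE /= mulr1 sub0r addr0.
- have := monicP (char_poly_monic A); rewrite lead_coefE size_chA /= => ->.
  by rewrite !coefE /= mulr0 subr0 addr0.
- by rewrite nth_default ?size_chA // !coefE /= mulr0 subr0 addr0.
Qed.

Lemma mx2_Cayley_Hamilton (R : comNzRingType) (A : 'M[R]_2) :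
  A ^+ 2 = \tr A *: A - (\det A)%:M.
Proof.
apply/eqP; rewrite -subr_eq0 -(Cayley_Hamilton A) char_poly_mx2.
by rewrite !rmorphD !rmorphN !rmorphM /= horner_mx_X !horner_mx_C -mulmxE
  mul_scalar_mx expr2 mulmxE opprB addrA addrAC.
Qed.

(* [chebyU t k] is U_(k-2)(t/2), U the Chebyshev polynomials of the second kind. *)
Fixpoint chebyU {R : comNzRingType} (t : R) (k : nat) : R :=
  match k with
  | 0 => -1
  | 1 => 0
  | (k'.+1 as k1).+1 => t * chebyU t k1 - chebyU t k'
  end.

Lemma chebyUSS (R : comNzRingType) (t : R) k :
  chebyU t k.+2 = t * chebyU t k.+1 - chebyU t k.
Proof. by []. Qed.

Lemma chebyU0_mul (R : comNzRingType) k : chebyU (0 : R) k.+1 * chebyU 0 k = 0.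
Proof.
elim: k => [|k IHk]; first by rewrite mul0r.
by rewrite chebyUSS mul0r sub0r mulNr mulrC IHk oppr0.
Qed.

Lemma expr_mx2_det1 (R : comNzRingType) (A : 'M[R]_2) k : \det A = 1 ->
  A ^+ k = chebyU (\tr A) k.+1 *: A - (chebyU (\tr A) k)%:A.
Proof.
move=> detA1; elim: k => [|k IHk].
  by rewrite expr0 scale0r sub0r scaleN1r opprK.
have sqrA : A * A = \tr A *: A - 1 by rewrite -expr2 mx2_Cayley_Hamilton detA1.
rewrite exprS IHk mulrBr -scalerAr sqrA mulr_algr chebyUSS.
by rewrite scalerBr scalerA scalerBl; apply/matrixP => i j; rewrite !mxE; ring.
Qed.

Definition qform {R : comNzRingType} (a b c x y : R) :=
  a * x ^+ 2 - b * (x * y) + c * y ^+ 2.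

Lemma qformB (R : comNzRingType) (a b c a' b' c' x y : R) :
  qform a b c x y - qform a' b' c' x y = qform (a - a') (b - b') (c - c') x y.
Proof. by rewrite /qform; ring. Qed.

Lemma mxtrace_mul_pencils (R : comNzRingType) n (X Y Z W : 'M[R]_n.+1) x y :
  \tr ((x *: X - y%:A) * Y * (x *: Z - y%:A) * W) =
  qform (\tr (X * Y * Z * W)) (\tr (X * Y * W) + \tr (Y * Z * W)) (\tr (Y * W)) x y.
Proof.
rewrite !mulrBl !mulrBr !mulrBl !mulr_algl !mulr_algr -!scalerAl -!scalerAr.
by rewrite !scalerA !raddfB /= !mxtraceZ -!scalerAl !mxtraceZ /qform; ring.
Qed.

Lemma mxtrace_expr_sandwich (R : comNzRingType) (X Y Z W : 'M[R]_2) k :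
  \det X = 1 -> \det Z = 1 -> \tr X = \tr Z ->
  \tr (X ^+ k * Y * Z ^+ k * W) =
  qform (\tr (X * Y * Z * W)) (\tr (X * Y * W) + \tr (Y * Z * W)) (\tr (Y * W))
    (chebyU (\tr Z) k.+1) (chebyU (\tr Z) k).
Proof.
move=> detX1 detZ1 trXZ.
by rewrite !expr_mx2_det1 // trXZ mxtrace_mul_pencils.
Qed.

Lemma qform_chebyU_eq0 (R : idomainType) (t a b c : R) :
  (forall k, (k <= 2)%N -> qform a b c (chebyU t k.+1) (chebyU t k) = 0) ->
  forall k, qform a b c (chebyU t k.+1) (chebyU t k) = 0.
Proof.
move=> vanish012.
have c0 : c = 0 by rewrite -(vanish012 0%N isT) /qform /=; ring.
have a0 : a = 0 by rewrite -(vanish012 1%N isT) /qform /= c0; ring.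
have bt0 : b * t = 0.
  by apply: oppr_inj; rewrite oppr0 -(vanish012 2%N isT) /qform /= a0 c0; ring.
move=> k; have -> : qform a b c (chebyU t k.+1) (chebyU t k)
                    = - (b * (chebyU t k.+1 * chebyU t k)).
  by rewrite /qform a0 c0; ring.
have [t0|tn0] := eqVneq t 0; first by rewrite t0 chebyU0_mul mulr0 oppr0.
by move/eqP: bt0; rewrite mulf_eq0 (negPf tn0) orbF => /eqP->; rewrite mul0r oppr0.
Qed.

Lemma eq_qform_chebyU (R : idomainType) (t a b c a' b' c' : R) :
  (forall k, (k <= 2)%N -> qform a b c (chebyU t k.+1) (chebyU t k)
                           = qform a' b' c' (chebyU t k.+1) (chebyU t k)) ->
  forall k, qform a b c (chebyU t k.+1) (chebyU t k)
            = qform a' b' c' (chebyU t k.+1) (chebyU t k).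
Proof.
move=> eq012 k; apply/eqP; rewrite -subr_eq0 qformB; apply/eqP.
by apply: qform_chebyU_eq0 => l l_le2; rewrite -qformB eq012 ?subrr.
Qed.

Theorem lemma2p4 (R : realType) (A B C D : 'M[R]_2) (n : nat) :
  SL2 A -> SL2 B -> SL2 C -> SL2 D ->
  \tr B = \tr D ->
  \tr (Mkl A B C D 0 0) = \tr (B ^+ n) ->
  \tr (Mkl A B C D 1 1) = \tr (B ^+ (n + 2)) ->
  \tr (Mkl A B C D 2 2) = \tr (B ^+ (n + 4)) ->
  forall k : nat, (3 <= k)%N -> \tr (Mkl A B C D k k) = \tr (B ^+ (n + 2 * k)).
Proof.
move=> _ detB1 _ detD1 trBD eq0 eq1 eq2 k _.
have trM l : \tr (Mkl A B C D l l) =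
    qform (\tr (D * C * B * A)) (\tr (D * C * A) + \tr (C * B * A)) (\tr (C * A))
      (chebyU (\tr B) l.+1) (chebyU (\tr B) l).
  by rewrite /Mkl !mulmxE mxtrace_expr_sandwich.
have trB l : \tr (B ^+ (n + 2 * l)) =
    qform (\tr (B * B ^+ n * B * 1)) (\tr (B * B ^+ n * 1) + \tr (B ^+ n * B * 1))
      (\tr (B ^+ n * 1)) (chebyU (\tr B) l.+1) (chebyU (\tr B) l).
  by rewrite -mxtrace_expr_sandwich // mulr1 -!exprD; congr (\tr (B ^+ _)); ring.
rewrite trM trB; apply: eq_qform_chebyU => -[|[|[|//]]] _; rewrite -trM -trB.
- by rewrite muln0 addn0.
- by rewrite muln1.
- exact: eq2.
Qed.
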